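(* For every $k\geq 2$, there exists a pair of $2k$-regular graphs that are cospectral with respect to the adjacency matrix and have different zero forcing numbers.
   Context: Graphs are finite, simple, undirected. The zero forcing number $Z(G)$ is the minimum size of a set $S\subseteq V(G)$ such that, if the vertices of $S$ are colored blue and all others white, repeated application of the rule ''a blue vertex with exactly one white neighbor forces that neighbor to become blue'' eventually makes every vertex blue. *)

From mathcomp Require Import all_boot all_order all_algebra.
Set Implicit Arguments. Unset Strict Implicit. Unset Printing Implicit Defensive.
Import GRing.Theory.

Definition simple_graph (T : finType) (e : rel T) : Prop :=
  symmetric e /\ irreflexive e.

Definition nbhd (T : finType) (e : rel T) (v : T) : {set T} := [set w | e v w].

Definition regular (T : finType) (d : nat) (e : rel T) : Prop :=
  forall v : T, #|nbhd e v| = d.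

Definition adj_mx (n : nat) (e : rel 'I_n) : 'M[int]_n :=
  \matrix_(i < n, j < n) (e i j)%:R%R.

Definition cospectral (n : nat) (e1 e2 : rel 'I_n) : Prop :=
  char_poly (adj_mx e1) = char_poly (adj_mx e2).

Definition force_step (T : finType) (e : rel T) (B : {set T}) : {set T} :=
  B :|: [set w | [exists u in B, e u w &&
          [forall x, (e u x && (x != w)) ==> (x \in B)]]].

(* Final blue set obtained from S by repeatedly applying the rule (the rule
   is monotone, so #|T| rounds reach the fixpoint). *)
Definition zf_closure (T : finType) (e : rel T) (S : {set T}) : {set T} :=
  iter #|T| (force_step e) S.

Definition zero_forcing_set (T : finType) (e : rel T) (S : {set T}) : bool :=
  zf_closure e S == [set: T].

(* Zero forcing number: minimum size of a zero forcing set
   ([set: T] is always a zero forcing set). *)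
Definition zero_forcing_number (T : finType) (e : rel T) : nat :=
  #|[arg min_(S < [set: T] | zero_forcing_set e S) #|S|]|.

From mathcomp Require Import all_boot all_order all_algebra zify.
Set Implicit Arguments. Unset Strict Implicit. Unset Printing Implicit Defensive.
Import GRing.Theory.

(* For r = 4, 6, 8 there are cospectral r-regular graphs G1, G2 on r + 6 vertices
   with Z(G1) <= r < Z(G2); they are given explicitly below and checked by computation.
   Joining both with the complete multipartite graph K_{6,...,6} with p parts gives
   (r + 6p)-regular graphs, and every 2k >= 4 has this form.  The joins stay cospectral:
   the matrix Q with Q A(G1) = A(G2) Q has constant row and column sums s, so diag(Q, sI)
   intertwines the adjacency matrices of the joins.  A zero forcing set of G1 together
   with all new vertices forces the join of G1, hence Z <= r + 6p there.  In a d-regular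
   graph Z > d as soon as no closed neighbourhood N[u] is a zero forcing set, since the
   first force u -> w of a forcing set S of size d shows S = N[u] - w.  In G2 and in
   K_{6,...,6} the forcing process started from any N[u] stalls with two white vertices
   left, and this property survives joins. *)

(** * Zero forcing through stalled sets *)

Section Stalled.
Variables (T : finType) (e : rel T).
Implicit Types S B : {set T}.

Definition stalled B := force_step e B \subset B.

Lemma subset_force_step B : B \subset force_step e B.
Proof. exact: subsetUl. Qed.

Lemma force_step_mono : {homo force_step e : A B / A \subset B}.
Proof.
move=> A B sAB; apply/subsetP => w; rewrite !inE => /orP [wA | ].
  by rewrite (subsetP sAB w wA).
case/existsP => u /andP [uA /andP [euw /forallP uw]].
apply/orP; right; apply/existsP; exists u.
rewrite (subsetP sAB u uA) euw /=; apply/forallP => x.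
by apply/implyP => exw; apply: (subsetP sAB); move/implyP: (uw x); apply.
Qed.

Lemma stalledT : stalled setT.
Proof. exact: subsetT. Qed.

Lemma subset_zf_closure S : S \subset zf_closure e S.
Proof.
rewrite /zf_closure; elim: #|T| => //= n IH.
exact: subset_trans IH (subset_force_step _).
Qed.

Lemma zf_closure_min S B : S \subset B -> stalled B -> zf_closure e S \subset B.
Proof.
move=> sSB stB; rewrite /zf_closure; elim: #|T| => //= n IH.
exact: subset_trans (force_step_mono IH) stB.
Qed.

(* The argument of [fixsetK]: the iterates cannot grow strictly for [#|T| + 1] steps. *)
Lemma zf_closure_stalled S : stalled (zf_closure e S).
Proof.
rewrite /stalled /zf_closure; set n := #|T|; set it := fun i => iter i (force_step e) S.
suff /existsP [x /eqP fix_x] : [exists k : 'I_n.+1, it k == it k.+1].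
  have fx : force_step e (it x) = it x := esym fix_x.
  by rewrite -(subnK (leq_ord x)) iterD iter_fix // fx.
apply: contraT => /existsPn /= grows.
suff it_big k : k <= n.+1 -> k <= #|it k|.
  by have := it_big _ (leqnn _); rewrite ltnNge max_card.
elim: k => [|k IHk] k_lt //=; apply: leq_ltn_trans (IHk (ltnW k_lt)) _.
by rewrite proper_card // properEneq subset_force_step andbT; apply: (grows (Ordinal k_lt)).
Qed.

Lemma zero_forcing_setP S :
  reflect (forall B, S \subset B -> stalled B -> B = setT) (zero_forcing_set e S).
Proof.
apply: (iffP eqP) => [zS B sSB stB | all_stalledT].
  by apply/eqP; rewrite eqEsubset subsetT /= -zS zf_closure_min.
by apply: all_stalledT; [apply: subset_zf_closure | apply: zf_closure_stalled].
Qed.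

Lemma zero_forcing_setS S S' : S \subset S' -> zero_forcing_set e S -> zero_forcing_set e S'.
Proof.
move=> sSS' /zero_forcing_setP zS; apply/zero_forcing_setP => B sS'B.
exact/zS/(subset_trans sSS').
Qed.

Lemma zero_forcing_setT : zero_forcing_set e setT.
Proof. by apply/zero_forcing_setP => B sTB _; apply/eqP; rewrite eqEsubset sTB subsetT. Qed.

Lemma zero_forcing_number_min S : zero_forcing_set e S -> zero_forcing_number e <= #|S|.
Proof.
move=> zS; rewrite /zero_forcing_number.
by case: (arg_minnP (fun S : {set T} => #|S|) zero_forcing_setT) => A _; apply.
Qed.

Lemma zero_forcing_numberP : exists2 S, zero_forcing_set e S & #|S| = zero_forcing_number e.
Proof.
rewrite /zero_forcing_number.
by case: (arg_minnP (fun S : {set T} => #|S|) zero_forcing_setT) => A zA _; exists A.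
Qed.

Lemma degree_lt_zero_forcing_number d : irreflexive e -> regular d e -> d < #|T| ->
  (forall u, ~~ zero_forcing_set e (u |: nbhd e u)) -> d < zero_forcing_number e.
Proof.
move=> irr reg dT nbhd_nzf; have [S zS <-] := zero_forcing_numberP.
rewrite ltnNge; apply/negP => Sd.
have /subsetPn [w] : ~~ stalled S.
  apply/negP => stS; have ST := elimT (zero_forcing_setP S) zS S (subxx S) stS.
  by move: Sd; rewrite ST cardsT leqNgt dT.
rewrite !inE => /orP [-> // | /existsP [u /andP [uS /andP [euw /forallP uw]]] wS].
have sub : u |: (nbhd e u :\ w) \subset S.
  apply/subsetP => x; rewrite !inE => /orP [/eqP -> // | /andP [xw eux]].
  by move/implyP: (uw x); apply; rewrite eux xw.
have card_d : #|u |: (nbhd e u :\ w)| = d.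
  have := cardsD1 w (nbhd e u); rewrite inE euw reg add1n => ->.
  by rewrite cardsU1 !inE irr andbF.
have eS : u |: (nbhd e u :\ w) = S by apply/eqP; rewrite eqEcard sub card_d Sd.
move/negP: (nbhd_nzf u); apply; apply: zero_forcing_setS zS.
by rewrite -eS setUS // subD1set.
Qed.

Definition closed_nbhds_stall := forall u, 1 < #|~: zf_closure e (u |: nbhd e u)|.

Lemma closed_nbhds_stall_not_zero_forcing :
  closed_nbhds_stall -> forall u, ~~ zero_forcing_set e (u |: nbhd e u).
Proof. by move=> st u; apply/eqP => zT; move: (st u); rewrite zT setCT cards0. Qed.

End Stalled.

(** * Joins *)

Lemma card_setC_eq1 (T : finType) (C : {set T}) c :
  c \notin C -> (forall x, x != c -> x \in C) -> #|~: C| = 1.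
Proof.
move=> cC allC; rewrite -(cards1 c); apply: eq_card => x; rewrite !inE.
by case: eqP => [-> // | /eqP /allC ->].
Qed.

Section Join.
Variables (M N : nat) (g : rel 'I_M) (h : rel 'I_N).
Implicit Types (C : {set 'I_M}) (D : {set 'I_N}).

Definition graph_join : rel 'I_(M + N) := fun u v =>
  match split u, split v with
  | inl a, inl c => g a c
  | inr a, inr c => h a c
  | _, _ => true
  end.

Definition joinset (C : {set 'I_M}) (D : {set 'I_N}) : {set 'I_(M + N)} :=
  [set u | match split u with inl a => a \in C | inr c => c \in D end].

Lemma split_lshift a : split (lshift N a) = inl a :> 'I_M + 'I_N.
Proof. exact: (unsplitK (inl a)). Qed.

Lemma split_rshift c : split (rshift M c) = inr c :> 'I_M + 'I_N.
Proof. exact: (unsplitK (inr c)). Qed.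

Let splitE := (split_lshift, split_rshift).

Lemma in_joinset_l C D a : (lshift N a \in joinset C D) = (a \in C).
Proof. by rewrite inE split_lshift. Qed.

Lemma in_joinset_r C D c : (rshift M c \in joinset C D) = (c \in D).
Proof. by rewrite inE split_rshift. Qed.
Let in_joinsetE := (in_joinset_l, in_joinset_r).

Lemma card_joinset C D : #|joinset C D| = #|C| + #|D|.
Proof.
rewrite -!sum1_card big_split_ord /=.
by congr (_ + _); apply: eq_bigl => x; rewrite in_joinsetE.
Qed.

Lemma setC_joinset C D : ~: joinset C D = joinset (~: C) (~: D).
Proof. by apply/setP => u; case: (split_ordP u) => x ->; rewrite !inE !splitE inE. Qed.

Lemma nbhd_join_lshift a : nbhd graph_join (lshift N a) = joinset (nbhd g a) setT.
Proof.
by apply/setP => u; case: (split_ordP u) => x ->; rewrite !inE /graph_join !splitE ?inE.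
Qed.

Lemma nbhd_join_rshift c : nbhd graph_join (rshift M c) = joinset setT (nbhd h c).
Proof.
by apply/setP => u; case: (split_ordP u) => x ->; rewrite !inE /graph_join !splitE ?inE.
Qed.

Lemma closed_nbhd_join_lshift a :
  lshift N a |: nbhd graph_join (lshift N a) = joinset (a |: nbhd g a) setT.
Proof.
apply/setP => u; rewrite nbhd_join_lshift; case: (split_ordP u) => x ->.
  by rewrite !inE !splitE !inE (inj_eq (@lshift_inj M N)).
by rewrite !inE !splitE !inE (eq_sym _ (lshift N a)) eq_lrshift.
Qed.

Lemma closed_nbhd_join_rshift c :
  rshift M c |: nbhd graph_join (rshift M c) = joinset setT (c |: nbhd h c).
Proof.
apply/setP => u; rewrite nbhd_join_rshift; case: (split_ordP u) => x ->.
  by rewrite !inE !splitE !inE eq_lrshift.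
by rewrite !inE !splitE !inE (inj_eq (@rshift_inj M N)).
Qed.

Lemma joinsetS C C' D D' : C \subset C' -> D \subset D' -> joinset C D \subset joinset C' D'.
Proof.
move=> sC sD; apply/subsetP => u; case: (split_ordP u) => x ->; rewrite !in_joinsetE.
  exact: (subsetP sC).
exact: (subsetP sD).
Qed.

Lemma simple_graph_join : simple_graph g -> simple_graph h -> simple_graph graph_join.
Proof.
move=> [gsym girr] [hsym hirr]; split.
  move=> u v; case: (split_ordP u) => x ->; case: (split_ordP v) => y ->;
  by rewrite /graph_join !splitE.
by move=> u; case: (split_ordP u) => x ->; rewrite /graph_join !splitE.
Qed.

Lemma regular_join r s : regular r g -> regular s h -> (0 < N -> r + N = s + M) ->
  regular (r + N) graph_join.
Proof.
move=> rg sh rs u; case: (split_ordP u) => x ->.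
  by rewrite nbhd_join_lshift card_joinset rg cardsT card_ord.
rewrite nbhd_join_rshift card_joinset sh cardsT card_ord addnC rs //.
exact: leq_ltn_trans (leq0n x) (ltn_ord x).
Qed.

(* A vertex adjacent to a whole side cannot force into it while two of its vertices are white. *)
Lemma stalled_join C D : stalled g C -> stalled h D -> #|~: C| != 1 -> #|~: D| != 1 ->
  stalled graph_join (joinset C D).
Proof.
move=> stC stD C1 D1; apply/subsetP => w; rewrite /force_step in_setU.
case/orP => [// | ]; rewrite inE => /existsP [u /andP [uCD /andP [euw /forallP uw]]].
have blue_except x : graph_join u x -> x != w -> x \in joinset C D.
  by move=> eux xw; move/implyP: (uw x); apply; rewrite eux.
case: (split_ordP w) euw blue_except => c -> euw blue_except; rewrite in_joinsetE.
all: case: (split_ordP u) uCD euw blue_except => a -> aCD euw blue_except.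
all: move: aCD euw; rewrite in_joinsetE /graph_join !splitE => aCD euw.
- apply: (subsetP stC); rewrite !inE; apply/orP; right; apply/existsP; exists a.
  rewrite aCD euw; apply/forallP => x; apply/implyP => /andP [eax xc].
  by rewrite -(in_joinset_l C D) blue_except ?(inj_eq (@lshift_inj M N)) // /graph_join !splitE.
- apply: contraTT C1 => cC; rewrite negbK; apply/eqP; apply: (card_setC_eq1 cC) => x xc.
  by rewrite -(in_joinset_l C D) blue_except ?(inj_eq (@lshift_inj M N)) // /graph_join !splitE.
- apply: contraTT D1 => cD; rewrite negbK; apply/eqP; apply: (card_setC_eq1 cD) => x xc.
  by rewrite -(in_joinset_r C D) blue_except ?(inj_eq (@rshift_inj M N)) // /graph_join !splitE.
- apply: (subsetP stD); rewrite !inE; apply/orP; right; apply/existsP; exists a.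
  rewrite aCD euw; apply/forallP => x; apply/implyP => /andP [eax xc].
  by rewrite -(in_joinset_r C D) blue_except ?(inj_eq (@rshift_inj M N)) // /graph_join !splitE.
Qed.

Lemma card_setC_zf_closure_join C D (S : {set 'I_(M + N)}) :
  stalled g C -> stalled h D -> #|~: C| != 1 -> #|~: D| != 1 -> S \subset joinset C D ->
  #|~: C| + #|~: D| <= #|~: zf_closure graph_join S|.
Proof.
move=> stC stD C1 D1 sS; rewrite -card_joinset -setC_joinset.
by apply/subset_leq_card; rewrite setCS zf_closure_min // stalled_join.
Qed.

Lemma closed_nbhds_stall_join :
  closed_nbhds_stall g -> closed_nbhds_stall h -> closed_nbhds_stall graph_join.
Proof.
move=> stg sth u; case: (split_ordP u) => x ->.
  apply: leq_trans (stg x) _; rewrite -[X in X <= _]addn0 -(cards0 'I_N) -setCT.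
  apply: card_setC_zf_closure_join; rewrite ?zf_closure_stalled ?stalledT ?setCT ?cards0 //.
    by rewrite neq_ltn stg orbT.
  by rewrite closed_nbhd_join_lshift joinsetS ?subset_zf_closure.
apply: leq_trans (sth x) _; rewrite -[X in X <= _]add0n -(cards0 'I_M) -setCT.
apply: card_setC_zf_closure_join; rewrite ?zf_closure_stalled ?stalledT ?setCT ?cards0 //.
  by rewrite neq_ltn sth orbT.
by rewrite closed_nbhd_join_rshift joinsetS ?subset_zf_closure.
Qed.

Lemma zero_forcing_set_join C :
  zero_forcing_set g C -> zero_forcing_set graph_join (joinset C setT).
Proof.
move=> /zero_forcing_setP zC; apply/zero_forcing_setP => B sCB stB.
set L := [set a | lshift N a \in B].
have rB c : rshift M c \in B by apply: (subsetP sCB); rewrite in_joinsetE inE.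
have sCL : C \subset L by apply/subsetP => a aC; rewrite inE (subsetP sCB) ?in_joinsetE.
have stL : stalled g L.
  apply/subsetP => w; rewrite /force_step in_setU => /orP [// | ].
  rewrite inE => /existsP [u /andP [uL /andP [guw /forallP uw]]].
  rewrite inE; apply: (subsetP stB); rewrite /force_step in_setU inE; apply/orP; right.
  apply/existsP; exists (lshift N u); rewrite inE in uL.
  rewrite uL /graph_join !splitE guw; apply/forallP => v.
  case: (split_ordP v) => x ->; rewrite ?rB ?implybT //.
  by rewrite (inj_eq (@lshift_inj M N)); move: (uw x); rewrite inE.
have LT := zC L sCL stL.
apply/setP => u; rewrite inE; case: (split_ordP u) => x ->; last exact: rB.
by have := in_setT x; rewrite -LT inE.
Qed.

Lemma adj_mx_join :
  adj_mx graph_join = block_mx (adj_mx g) (const_mx 1%R) (const_mx 1%R) (adj_mx h).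
Proof.
apply/matrixP => u v; case: (split_ordP u) => x ->; case: (split_ordP v) => y ->;
by rewrite ?block_mxEul ?block_mxEur ?block_mxEdl ?block_mxEdr !mxE /graph_join !splitE.
Qed.

End Join.

Section Cospectral.
Local Open Scope ring_scope.

Lemma char_poly_intertwined (R : idomainType) n (A B P : 'M[R]_n) :
  P *m A = B *m P -> \det P != 0 -> char_poly A = char_poly B.
Proof.
move=> PA_BP detP; pose Px := map_mx (@polyC R) P.
have : Px *m char_poly_mx A = char_poly_mx B *m Px.
  by rewrite mulmxBr mulmxBl -!map_mxM PA_BP mul_mx_scalar mul_scalar_mx.
move/(congr1 determinant); rewrite !det_mulmx det_map_mx mulrC.
by move/mulIf; apply; rewrite polyC_eq0.
Qed.

Lemma cospectral_join M N (g1 g2 : rel 'I_M) (h : rel 'I_N) (Q : 'M[int]_M) (s : int) :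
  Q *m adj_mx g1 = adj_mx g2 *m Q ->
  (forall i, \sum_j Q i j = s) -> (forall j, \sum_i Q i j = s) -> s != 0 -> \det Q != 0 ->
  cospectral (graph_join g1 h) (graph_join g2 h).
Proof.
move=> QA rows cols s_neq0 detQ; rewrite /cospectral !adj_mx_join.
have QJ : Q *m const_mx 1 = const_mx s :> 'M_(M, N).
  by apply/matrixP => i j; rewrite !mxE -(rows i); apply: eq_bigr => l _; rewrite mxE mulr1.
have JQ : const_mx 1 *m Q = const_mx s :> 'M_(N, M).
  by apply/matrixP => i j; rewrite !mxE -(cols j); apply: eq_bigr => l _; rewrite mxE mul1r.
apply: (@char_poly_intertwined _ _ _ _ (block_mx Q 0 0 s%:M)).
  rewrite !mulmx_block !mul0mx !mulmx0 !addr0 !add0r QA QJ JQ.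
  by rewrite !mul_scalar_mx !mul_mx_scalar !scalemx_const mulr1.
by rewrite det_ublock det_scalar mulf_neq0 // expf_neq0.
Qed.

End Cospectral.

(** * Complete multipartite graphs *)

Section CompleteMultipartite.
Variables b p : nat.

Definition complete_multipartite : rel 'I_(b * p) := fun c c' => c %/ b != c' %/ b.

Definition part (c : 'I_(b * p)) : {set 'I_(b * p)} := [set c' : 'I_(b * p) | c' %/ b == c %/ b].

Lemma card_part c : #|part c| = b.
Proof.
have b_gt0 : 0 < b by case: b c => [|//] [].
pose f (j : 'I_b) : 'I_(b * p) := insubd c (c %/ b * b + j).
have valf j : val (f j) = c %/ b * b + j.
  rewrite val_insubd; case: ltnP => // /negP[].
  have : c %/ b < p by rewrite ltn_divLR // [p * b]mulnC.
  have := ltn_ord j; move: (c %/ b) => q; nia.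
have -> : part c = f @: setT.
  apply/setP => c'; rewrite inE; apply/eqP/imsetP => [same | [j _ ->]].
    exists (Ordinal (ltn_pmod c' b_gt0)) => //; apply: val_inj.
    by rewrite valf /= -same -divn_eq.
  by rewrite valf divnMDl // (divn_small (ltn_ord j)) addn0.
by rewrite card_imset ?cardsT ?card_ord // => j j' /(congr1 val); rewrite !valf => /addnI /val_inj.
Qed.

Lemma simple_complete_multipartite : simple_graph complete_multipartite.
Proof. by split=> [c c' | c]; rewrite /complete_multipartite ?eqxx // eq_sym. Qed.

Lemma nbhd_complete_multipartite c : nbhd complete_multipartite c = ~: part c.
Proof. by apply/setP => c'; rewrite !inE eq_sym. Qed.

Lemma regular_complete_multipartite : regular (b * p - b) complete_multipartite.
Proof.
by move=> c; rewrite nbhd_complete_multipartite cardsCs setCK card_ord card_part.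
Qed.

Lemma closed_nbhds_stall_complete_multipartite :
  2 < b -> closed_nbhds_stall complete_multipartite.
Proof.
move=> b_gt2 c; set e := complete_multipartite.
have Nc : c |: nbhd e c = ~: (part c :\ c).
  by apply/setP => c'; rewrite !inE negb_and negbK /e /complete_multipartite (eq_sym (c %/ b)).
(* A vertex adjacent to the white vertex [w] lies outside its part, so it also sees a
   second white vertex [w'] of that part. *)
have stalled_Nc : stalled e (~: (part c :\ c)).
  apply/subsetP => w; rewrite /force_step in_setU => /orP [// | ].
  rewrite inE => /existsP [u /andP [_ /andP [euw /forallP uw]]].
  rewrite !inE; apply/negP => /andP [wc w_part].
  have : 0 < #|part c :\ c :\ w|.
    have := card_part c; rewrite (cardsD1 c) (cardsD1 w (part c :\ c)) !inE eqxx wc w_part.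
    by move=> /= card_b; move: b_gt2; rewrite -{1}card_b !add1n !ltnS lt0n.
  case/card_gt0P => w' /setD1P [w'w /setD1P [w'c]]; rewrite inE => w'_part.
  have euw' : e u w'.
    move: euw w_part w'_part; rewrite /e /complete_multipartite.
    by move=> ne_uw /eqP w_eq /eqP w'_eq; rewrite w'_eq -w_eq.
  by have := uw w'; rewrite euw' w'w !inE w'c w'_part.
rewrite Nc; have := card_part c; rewrite (cardsD1 c (part c)) inE eqxx => /= card_b.
apply: leq_trans (subset_leq_card (_ : part c :\ c \subset _)).
  by move: b_gt2; rewrite -{1}card_b add1n ltnS.
by rewrite -setCS setCK zf_closure_min.
Qed.

End CompleteMultipartite.

Arguments complete_multipartite : clear implicits.

Definition cospectral_pair_distinct_zf (d : nat) : Prop :=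
  exists (n : nat) (e1 e2 : rel 'I_n),
    [/\ simple_graph e1, simple_graph e2, regular d e1, regular d e2 &
        cospectral e1 e2 /\ zero_forcing_number e1 <> zero_forcing_number e2].

Lemma join_complete_multipartite_pair r b p (g1 g2 : rel 'I_(r + b)) (Q : 'M[int]_(r + b))
    (s : int) (S : {set 'I_(r + b)}) :
  2 < b ->
  simple_graph g1 -> simple_graph g2 -> regular r g1 -> regular r g2 ->
  (Q *m adj_mx g1 = adj_mx g2 *m Q)%R ->
  (forall i, \sum_j Q i j = s)%R -> (forall j, \sum_i Q i j = s)%R ->
  (s != 0)%R -> (\det Q != 0)%R ->
  zero_forcing_set g1 S -> #|S| <= r -> closed_nbhds_stall g2 ->
  cospectral_pair_distinct_zf (r + b * p).
Proof.
move=> b_gt2 simple1 simple2 reg1 reg2 QA rows cols s_neq0 detQ zS Sr stall2.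
set h := complete_multipartite b p.
have simpleJ (g : rel 'I_(r + b)) : simple_graph g -> simple_graph (graph_join g h).
  by move=> simple; apply: simple_graph_join simple (simple_complete_multipartite b p).
have regularJ (g : rel 'I_(r + b)) : regular r g -> regular (r + b * p) (graph_join g h).
  move=> reg; apply: regular_join reg (@regular_complete_multipartite b p) _.
  by rewrite muln_gt0 => /andP [_ /(leq_pmulr b)]; lia.
exists (r + b + b * p), (graph_join g1 h), (graph_join g2 h); split; auto.
split; first exact: cospectral_join QA rows cols s_neq0 detQ.
apply/eqP; rewrite neq_ltn; apply/orP; left.
apply: (@leq_ltn_trans (r + b * p)).
  apply: leq_trans (zero_forcing_number_min (zero_forcing_set_join h zS)) _.
  by rewrite card_joinset cardsT card_ord leq_add2r.
apply: degree_lt_zero_forcing_number (regularJ _ reg2) _ _.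
- by case: (simpleJ _ simple2).
- by rewrite card_ord; lia.
- apply: closed_nbhds_stall_not_zero_forcing; apply: closed_nbhds_stall_join stall2 _.
  exact: closed_nbhds_stall_complete_multipartite.
Qed.

(** * Certificates checked by computation *)

Section OrdinalEnumeration.
Variables (N : nat) (P : pred nat).

Lemma all_iota_ordP : reflect (forall i : 'I_N, P i) (all P (iota 0 N)).
Proof.
apply: (iffP allP) => [allP i | allP x]; first by apply: allP; rewrite mem_iota ltn_ord.
by rewrite mem_iota add0n => /andP [_ xN]; apply: (allP (Ordinal xN)).
Qed.

Lemma forall_ord_all : [forall i : 'I_N, P i] = all P (iota 0 N).
Proof. exact/forallP/all_iota_ordP. Qed.

Lemma exists_ord_has : [exists i : 'I_N, P i] = has P (iota 0 N).
Proof.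
apply/existsP/hasP => [[i Pi] | [x]]; first by exists (val i); rewrite // mem_iota ltn_ord.
by rewrite mem_iota add0n => /andP [_ xN] Px; exists (Ordinal xN).
Qed.

Lemma card_ord_count : #|[set i : 'I_N | P i]| = count P (iota 0 N).
Proof.
rewrite -sum1_card -sum1_count (eq_bigl (fun i : 'I_N => P i)) => [|i]; last by rewrite inE.
by rewrite -(big_mkord P (fun=> 1)) /index_iota subn0.
Qed.

End OrdinalEnumeration.

Lemma sum_ord_foldr (R : nmodType) N (F : nat -> R) :
  (\sum_(i < N) F i = foldr (fun i s => F i + s) 0 (iota 0 N))%R.
Proof. by rewrite -(big_mkord xpredT) /index_iota subn0 unlock. Qed.

Section FiniteGraphOfRelation.
Variables (N : nat) (r : rel nat).

Definition ord_rel : rel 'I_N := fun i j => r i j.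

Definition set_of (bs : seq bool) : {set 'I_N} := [set i : 'I_N | nth false bs i].

Definition force_stepb (bs : seq bool) : seq bool :=
  let blue := nth false bs in
  mkseq (fun w => blue w || has (fun u =>
    [&& blue u, r u w & all (fun x => (r u x && (x != w)) ==> blue x) (iota 0 N)]) (iota 0 N)) N.

Definition simple_graphb : bool :=
  all (fun i => all (fun j => r i j == r j i) (iota 0 N) && ~~ r i i) (iota 0 N).

Definition regularb (d : nat) : bool := all (fun i => count (r i) (iota 0 N) == d) (iota 0 N).

Lemma set_of_mkseq (P : pred nat) : set_of (mkseq P N) = [set i : 'I_N | P i].
Proof. by apply/setP => i; rewrite !inE nth_mkseq. Qed.

Lemma force_step_set_of bs : force_step ord_rel (set_of bs) = set_of (force_stepb bs).
Proof.
apply/setP => w; rewrite !inE nth_mkseq //; congr (_ || _).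
rewrite -exists_ord_has; apply: eq_existsb => u; rewrite inE -forall_ord_all.
by congr [&& _, _ & _]; apply: eq_forallb => x; rewrite inE.
Qed.

Lemma simple_graph_ord_rel : simple_graphb -> simple_graph ord_rel.
Proof.
move=> /all_iota_ordP simple; split => [i j | i]; have /andP [/all_iota_ordP sym irr] := simple i.
  exact/eqP/sym.
exact/negbTE.
Qed.

Lemma regular_ord_rel d : regularb d -> regular d ord_rel.
Proof. by move=> /all_iota_ordP reg i; rewrite card_ord_count; apply/eqP. Qed.

Definition zf_closureb (bs : seq bool) : seq bool := iter N force_stepb bs.

Definition zero_forcing_setb (S : seq nat) : bool :=
  all (nth false (zf_closureb (mkseq (mem S) N))) (iota 0 N).

Definition closed_nbhds_stallb : bool := all (fun a =>
  1 < count (predC (nth false (zf_closureb (mkseq (fun x => (x == a) || r a x) N)))) (iota 0 N))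
  (iota 0 N).

Lemma zf_closure_set_of bs : zf_closure ord_rel (set_of bs) = set_of (zf_closureb bs).
Proof.
have iterE n : iter n (force_step ord_rel) (set_of bs) = set_of (iter n force_stepb bs).
  by elim: n => //= n ->; rewrite force_step_set_of.
by rewrite /zf_closure card_ord iterE.
Qed.

Lemma zero_forcing_set_ord_rel S :
  zero_forcing_setb S -> zero_forcing_set ord_rel [set i : 'I_N | val i \in S].
Proof.
move=> /all_iota_ordP zS; rewrite /zero_forcing_set -set_of_mkseq zf_closure_set_of.
by apply/eqP/setP => i; rewrite !inE zS.
Qed.

Lemma closed_nbhds_stall_ord_rel : closed_nbhds_stallb -> closed_nbhds_stall ord_rel.
Proof.
move=> /all_iota_ordP st a.
have -> : a |: nbhd ord_rel a = set_of (mkseq (fun x => (x == a) || r a x) N).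
  by rewrite set_of_mkseq; apply/setP => x; rewrite !inE.
rewrite zf_closure_set_of; set C := zf_closureb _.
have -> : ~: set_of C = [set x : 'I_N | predC (nth false C) x] by apply/setP => x; rewrite !inE.
by rewrite card_ord_count; apply: st.
Qed.

End FiniteGraphOfRelation.

Arguments ord_rel : clear implicits.

Local Open Scope ring_scope.

Section IntMatrixOfFunction.
Variable N : nat.
Implicit Types f g : nat -> nat -> int.

Definition mx_of f : 'M[int]_N := \matrix_(i, j) f i j.

Definition mul_fun f g i j : int := foldr (fun l s => f i l * g l j + s) 0 (iota 0 N).

Definition eq_funb f g : bool :=
  all (fun i => all (fun j => f i j == g i j) (iota 0 N)) (iota 0 N).

Lemma mx_of_mul f g : mx_of f *m mx_of g = mx_of (mul_fun f g).
Proof.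
apply/matrixP => i j; rewrite !mxE /mul_fun -(@sum_ord_foldr _ N (fun l => f i l * g l j)).
by apply: eq_bigr => l _; rewrite !mxE.
Qed.

Lemma eq_mx_of f g : eq_funb f g -> mx_of f = mx_of g.
Proof.
move=> /all_iota_ordP eq_fg; apply/matrixP => i j; rewrite !mxE.
by move/all_iota_ordP: (eq_fg i) => /(_ j) /eqP.
Qed.

Lemma trmx_mx_of f : (mx_of f)^T = mx_of (fun i j => f j i).
Proof. by apply/matrixP => i j; rewrite !mxE. Qed.

Lemma scalar_mx_of (a : int) : a%:M = mx_of (fun i j => a *+ (i == j)).
Proof. by apply/matrixP => i j; rewrite !mxE. Qed.

Lemma adj_mx_ord_rel (r : rel nat) : adj_mx (ord_rel N r) = mx_of (fun i j => (r i j)%:R).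
Proof. by apply/matrixP => i j; rewrite !mxE. Qed.

Lemma row_sum_mx_of f (i : 'I_N) :
  \sum_j mx_of f i j = foldr (fun l s => f i l + s) 0 (iota 0 N).
Proof. by rewrite -sum_ord_foldr; apply: eq_bigr => j _; rewrite mxE. Qed.

Lemma col_sum_mx_of f (j : 'I_N) :
  \sum_i mx_of f i j = foldr (fun l s => f l j + s) 0 (iota 0 N).
Proof. by rewrite -sum_ord_foldr; apply: eq_bigr => i _; rewrite mxE. Qed.

End IntMatrixOfFunction.

Record certificate := Certificate {
  cert_degree : nat;
  cert_graph1 : seq (seq nat);
  cert_graph2 : seq (seq nat);
  cert_forcing_set : seq nat;
  cert_intertwiner : seq (seq int) }.

Definition adj_list (L : seq (seq nat)) : rel nat := fun i j => j \in nth [::] L i.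

Definition table (Q : seq (seq int)) (i j : nat) : int := nth 0 (nth [::] Q i) j.

Definition valid_certificate (c : certificate) : bool :=
  let: Certificate r G1 G2 B Q := c in
  let N := (r + 6)%N in
  let g1 := adj_list G1 in
  let g2 := adj_list G2 in
  let q := table Q in
  let adj (g : rel nat) i j : int := (g i j)%:R in
  let sums_to_2 F := foldr (fun l s => F l + s) 0 (iota 0 N) == 2 in
  [&& [&& simple_graphb N g1, simple_graphb N g2, regularb N g1 r & regularb N g2 r],
      [&& zero_forcing_setb N g1 B, (count (mem B) (iota 0 N) <= r)%N & closed_nbhds_stallb N g2]
    & [&& eq_funb N (mul_fun N q (adj g1)) (mul_fun N (adj g2) q),
          all (fun i => sums_to_2 (q i)) (iota 0 N), all (fun j => sums_to_2 (q^~ j)) (iota 0 N)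
        & eq_funb N (mul_fun N (fun i j => q j i) q) (fun i j => 4 *+ (i == j))]].

Lemma certificate_pair c p :
  valid_certificate c -> cospectral_pair_distinct_zf (cert_degree c + 6 * p).
Proof.
case: c => r G1 G2 B Q /=; set N := (r + 6)%N.
case/and3P => /and4P [simple1 simple2 reg1 reg2] /and3P [zS B_le stall2].
case/and4P => QA /all_iota_ordP rows /all_iota_ordP cols QtQ.
have QtQ4 : (mx_of N (table Q))^T *m mx_of N (table Q) = 4%:M.
  by rewrite trmx_mx_of mx_of_mul scalar_mx_of; apply: eq_mx_of.
apply: (@join_complete_multipartite_pair r 6 p _ _ (mx_of N (table Q)) 2 [set i | val i \in B]).
- by [].
- exact: simple_graph_ord_rel simple1.
- exact: simple_graph_ord_rel simple2.
- exact: regular_ord_rel reg1.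
- exact: regular_ord_rel reg2.
- by rewrite !adj_mx_ord_rel !mx_of_mul; apply: eq_mx_of.
- by move=> i; rewrite row_sum_mx_of; apply/eqP/rows.
- by move=> j; rewrite col_sum_mx_of; apply/eqP/cols.
- by [].
- apply/eqP => detQ0; move/eqP: (congr1 determinant QtQ4).
  by rewrite det_mulmx det_tr detQ0 mul0r det_scalar eq_sym expf_eq0 => /andP [].
- exact: zero_forcing_set_ord_rel zS.
- by rewrite card_ord_count.
- exact: closed_nbhds_stall_ord_rel stall2.
Qed.

(* Each intertwiner is twice a Godsil-McKay switching matrix (2/4 J - I on a switching set
   of four vertices) composed with a permutation: Q^T Q = 4 I and all line sums are 2. *)
Definition certificate_deg4 : certificate := {|
  cert_degree := 4;
  cert_graph1 := [::
    [:: 3; 6; 7; 8];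
    [:: 2; 4; 6; 9];
    [:: 1; 3; 4; 7];
    [:: 0; 2; 4; 7];
    [:: 1; 2; 3; 5];
    [:: 4; 6; 8; 9];
    [:: 0; 1; 5; 8];
    [:: 0; 2; 3; 9];
    [:: 0; 5; 6; 9];
    [:: 1; 5; 7; 8]];
  cert_graph2 := [::
    [:: 1; 5; 7; 9];
    [:: 0; 2; 8; 9];
    [:: 1; 4; 6; 8];
    [:: 5; 6; 7; 8];
    [:: 2; 5; 7; 9];
    [:: 0; 3; 4; 7];
    [:: 2; 3; 8; 9];
    [:: 0; 3; 4; 5];
    [:: 1; 2; 3; 6];
    [:: 0; 1; 4; 6]];
  cert_forcing_set := [:: 0; 1; 5; 6];
  cert_intertwiner := [::
    [:: 0; 0; 1; 0; 0; 1; 1; -1; 0; 0];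
    [:: 0; 0; 0; 0; 2; 0; 0; 0; 0; 0];
    [:: 0; 0; 1; 0; 0; 1; -1; 1; 0; 0];
    [:: 2; 0; 0; 0; 0; 0; 0; 0; 0; 0];
    [:: 0; 0; 0; 0; 0; 0; 0; 0; 0; 2];
    [:: 0; 0; 0; 0; 0; 0; 0; 0; 2; 0];
    [:: 0; 0; 1; 0; 0; -1; 1; 1; 0; 0];
    [:: 0; 0; -1; 0; 0; 1; 1; 1; 0; 0];
    [:: 0; 0; 0; 2; 0; 0; 0; 0; 0; 0];
    [:: 0; 2; 0; 0; 0; 0; 0; 0; 0; 0]] |}.

Definition certificate_deg6 : certificate := {|
  cert_degree := 6;
  cert_graph1 := [::
    [:: 3; 5; 6; 8; 10; 11];
    [:: 2; 3; 8; 9; 10; 11];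
    [:: 1; 3; 6; 7; 9; 10];
    [:: 0; 1; 2; 6; 7; 11];
    [:: 5; 6; 7; 8; 9; 11];
    [:: 0; 4; 7; 8; 10; 11];
    [:: 0; 2; 3; 4; 8; 9];
    [:: 2; 3; 4; 5; 9; 10];
    [:: 0; 1; 4; 5; 6; 11];
    [:: 1; 2; 4; 6; 7; 10];
    [:: 0; 1; 2; 5; 7; 9];
    [:: 0; 1; 3; 4; 5; 8]];
  cert_graph2 := [::
    [:: 1; 5; 7; 8; 9; 11];
    [:: 0; 2; 3; 4; 7; 9];
    [:: 1; 4; 6; 7; 8; 10];
    [:: 1; 4; 5; 8; 9; 11];
    [:: 1; 2; 3; 5; 7; 10];
    [:: 0; 3; 4; 8; 10; 11];
    [:: 2; 7; 8; 9; 10; 11];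
    [:: 0; 1; 2; 4; 6; 10];
    [:: 0; 2; 3; 5; 6; 11];
    [:: 0; 1; 3; 6; 10; 11];
    [:: 2; 4; 5; 6; 7; 9];
    [:: 0; 3; 5; 6; 8; 9]];
  cert_forcing_set := [:: 0; 1; 3; 4; 5; 11];
  cert_intertwiner := [::
    [:: 0; 1; 0; -1; 0; 0; 1; 0; 0; 1; 0; 0];
    [:: 0; 0; 0; 0; 2; 0; 0; 0; 0; 0; 0; 0];
    [:: 0; 0; 0; 0; 0; 0; 0; 0; 0; 0; 0; 2];
    [:: 0; 0; 0; 0; 0; 0; 0; 2; 0; 0; 0; 0];
    [:: 0; 0; 0; 0; 0; 2; 0; 0; 0; 0; 0; 0];
    [:: 0; 0; 0; 0; 0; 0; 0; 0; 0; 0; 2; 0];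
    [:: 0; 1; 0; 1; 0; 0; 1; 0; 0; -1; 0; 0];
    [:: 0; 0; 0; 0; 0; 0; 0; 0; 2; 0; 0; 0];
    [:: 0; 1; 0; 1; 0; 0; -1; 0; 0; 1; 0; 0];
    [:: 0; -1; 0; 1; 0; 0; 1; 0; 0; 1; 0; 0];
    [:: 2; 0; 0; 0; 0; 0; 0; 0; 0; 0; 0; 0];
    [:: 0; 0; 2; 0; 0; 0; 0; 0; 0; 0; 0; 0]] |}.

Definition certificate_deg8 : certificate := {|
  cert_degree := 8;
  cert_graph1 := [::
    [:: 2; 3; 4; 6; 7; 8; 12; 13];
    [:: 2; 3; 4; 5; 7; 9; 10; 13];
    [:: 0; 1; 3; 5; 9; 10; 11; 12];
    [:: 0; 1; 2; 4; 6; 9; 10; 11];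
    [:: 0; 1; 3; 5; 6; 7; 8; 11];
    [:: 1; 2; 4; 6; 7; 9; 11; 12];
    [:: 0; 3; 4; 5; 8; 9; 12; 13];
    [:: 0; 1; 4; 5; 8; 10; 12; 13];
    [:: 0; 4; 6; 7; 10; 11; 12; 13];
    [:: 1; 2; 3; 5; 6; 10; 11; 12];
    [:: 1; 2; 3; 7; 8; 9; 11; 13];
    [:: 2; 3; 4; 5; 8; 9; 10; 13];
    [:: 0; 2; 5; 6; 7; 8; 9; 13];
    [:: 0; 1; 6; 7; 8; 10; 11; 12]];
  cert_graph2 := [::
    [:: 1; 6; 7; 8; 10; 11; 12; 13];
    [:: 0; 3; 4; 5; 7; 8; 10; 13];
    [:: 3; 4; 5; 7; 9; 10; 11; 12];
    [:: 1; 2; 4; 8; 9; 10; 12; 13];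
    [:: 1; 2; 3; 6; 9; 11; 12; 13];
    [:: 1; 2; 6; 7; 8; 9; 11; 13];
    [:: 0; 4; 5; 8; 9; 10; 11; 12];
    [:: 0; 1; 2; 5; 8; 11; 12; 13];
    [:: 0; 1; 3; 5; 6; 7; 9; 13];
    [:: 2; 3; 4; 5; 6; 8; 10; 12];
    [:: 0; 1; 2; 3; 6; 9; 11; 12];
    [:: 0; 2; 4; 5; 6; 7; 10; 13];
    [:: 0; 2; 3; 4; 6; 7; 9; 10];
    [:: 0; 1; 3; 4; 5; 7; 8; 11]];
  cert_forcing_set := [:: 0; 1; 2; 3; 5; 9; 10; 11];
  cert_intertwiner := [::
    [:: 0; 0; 0; 0; 0; 0; 0; 0; 0; 0; 0; 0; 2; 0];
    [:: 0; 0; 0; 0; 0; 0; 0; 0; 0; 0; 0; 0; 0; 2];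
    [:: 0; 0; 0; 2; 0; 0; 0; 0; 0; 0; 0; 0; 0; 0];
    [:: 0; 0; 0; 0; 0; 0; 0; 0; 0; 0; 2; 0; 0; 0];
    [:: 0; 0; 0; 0; 0; 0; 0; 0; 0; 0; 0; 2; 0; 0];
    [:: 0; 1; 0; 0; 1; 0; 1; 0; 0; -1; 0; 0; 0; 0];
    [:: 0; 0; 0; 0; 0; 2; 0; 0; 0; 0; 0; 0; 0; 0];
    [:: 2; 0; 0; 0; 0; 0; 0; 0; 0; 0; 0; 0; 0; 0];
    [:: 0; 0; 0; 0; 0; 0; 0; 2; 0; 0; 0; 0; 0; 0];
    [:: 0; 1; 0; 0; 1; 0; -1; 0; 0; 1; 0; 0; 0; 0];
    [:: 0; 1; 0; 0; -1; 0; 1; 0; 0; 1; 0; 0; 0; 0];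
    [:: 0; -1; 0; 0; 1; 0; 1; 0; 0; 1; 0; 0; 0; 0];
    [:: 0; 0; 2; 0; 0; 0; 0; 0; 0; 0; 0; 0; 0; 0];
    [:: 0; 0; 0; 0; 0; 0; 0; 0; 2; 0; 0; 0; 0; 0]] |}.

Local Close Scope ring_scope.

Theorem theorem5p3 (k : nat) : 2 <= k ->
  exists (n : nat) (e1 e2 : rel 'I_n),
    [/\ simple_graph e1, simple_graph e2,
        regular (2 * k) e1, regular (2 * k) e2 &
        cospectral e1 e2 /\
        zero_forcing_number e1 <> zero_forcing_number e2].
Proof.
move=> k_ge2; rewrite (divn_eq k 3) in k_ge2 *.
have : k %% 3 < 3 by rewrite ltn_mod.
move: (k %/ 3) (k %% 3) k_ge2 => q [|[|[|//]]] k_ge2 _.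
- have -> : 2 * (q * 3 + 0) = cert_degree certificate_deg6 + 6 * q.-1 by rewrite /=; lia.
  by apply: certificate_pair; vm_compute.
- have -> : 2 * (q * 3 + 1) = cert_degree certificate_deg8 + 6 * q.-1 by rewrite /=; lia.
  by apply: certificate_pair; vm_compute.
- have -> : 2 * (q * 3 + 2) = cert_degree certificate_deg4 + 6 * q by rewrite /=; lia.
  by apply: certificate_pair; vm_compute.
Qed.
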